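(* Let $\mathbf{z}_1,\dots,\mathbf{z}_m\in\mathbb{R}_{>0}^n$ and $w_1,\dots,w_m\in\mathbb{R}_{>0}$ be such that $w_i=\ell(\mathbf{z}_i)$, $i=1,\dots,m$, for some function $\ell:\mathbb{R}_{>0}^n\to\mathbb{R}_{>0}$. Then for every $\tilde\varepsilon>0$ there exist a rational $T>0$ and two functions $\psi_T,\psi'_T\in\mathrm{GPOS}_T$ with rational parameters such that $$\left|\frac{w_i-\psi_T(\mathbf{z}_i)/\psi'_T(\mathbf{z}_i)}{\min\big(w_i,\psi_T(\mathbf{z}_i)/\psi'_T(\mathbf{z}_i)\big)}\right|\leqslant\tilde\varepsilon,\quad i=1,\dots,m.$$
   Context: A posynomial is a function $\psi:\mathbb{R}_{>0}^n\to\mathbb{R}_{>0}$, $\psi(\mathbf{x})=\sum_{k=1}^K c_k\mathbf{x}^{\boldsymbol{\alpha}^{(k)}}$, with $K$ a positive integer, $c_k>0$, $\boldsymbol{\alpha}^{(k)}\in\mathbb{R}^n$, and $\mathbf{x}^{\boldsymbol{\alpha}}=x_1^{\alpha_1}\cdots x_n^{\alpha_n}$. For $T>0$, $\mathrm{GPOS}_T$ is the class of functions $\psi_T(\mathbf{x})=(\psi(\mathbf{x}^{1/T}))^T$ with $\psi$ a posynomial (powers taken entrywise). $\psi_T\in\mathrm{GPOS}_T$ has rational parameters if it can be written so with $T$ rational, all entries of the $\boldsymbol{\alpha}^{(k)}$ rational, and all $\log c_k$ rational. *)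

From HB Require Import structures.
From mathcomp Require Import all_boot all_order all_algebra.
From mathcomp Require Import all_classical all_reals all_analysis.
Set Implicit Arguments. Unset Strict Implicit. Unset Printing Implicit Defensive.
Import Order.TTheory GRing.Theory Num.Theory.
Local Open Scope ring_scope.

(* Rational parameter data of a posynomial in n variables:
   K terms, log-coefficients log c_k in Q, exponents alpha^(k)_j in Q. *)
Record gpos_data (n : nat) := GposData {
  gK : nat;
  glogc : 'I_gK -> rat;
  galpha : 'I_gK -> 'I_n -> rat }.
Arguments gK {n}.
Arguments glogc {n}.
Arguments galpha {n}.

Definition posy (R : realType) (n : nat) (d : gpos_data n) (x : 'I_n -> R) : R :=
  \sum_(k < gK d) expR (ratr (glogc d k)) *
     \prod_(j < n) (x j) `^ (ratr (galpha d k j)).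

Definition gposT (R : realType) (n : nat) (T : R) (d : gpos_data n) (x : 'I_n -> R) : R :=
  (posy d (fun j => x j `^ T^-1)) `^ T.

From HB Require Import structures.
From mathcomp Require Import all_boot all_order all_algebra.
From mathcomp Require Import all_classical all_reals all_analysis.
From mathcomp Require Import ring lra.
Import Order.TTheory GRing.Theory Num.Theory.
Local Open Scope ring_scope.

(* Writing u = ln x, an element of GPOS_T is exp (T ln sum_k exp (E_k(u) / T))
   with each E_k affine in u: a soft maximum of the E_k, within T ln K of
   their maximum.  Put a rational center q_k near each data point u_k and take
   E_k(u) = b_k + C (|u|^2 - |u - q_k|^2), with b_k a rational approximation
   of ln w_k.  For C large the k-th term dominates at u_k by a margin, and
   dividing by the same function with all b_k = 0 cancels the common quadratic
   part, so the log of the quotient at z_k is close to b_k once T is small.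
   A small error on logarithms is a small relative error. *)

Section Approximation.
Context {R : realType}.

Lemma exists_rat_approx {e : R} :
  0 < e -> exists F : R -> rat, forall x, `|ratr (F x) - x| < e.
Proof.
move=> e0; have near_rat x : exists q : rat, `|ratr q - x| < e.
  have /rat_in_itvoo[q] : x - e < x + e by lra.
  rewrite in_itv /= => /andP[q_gt q_lt].
  by exists q; rewrite ltr_norml; apply/andP; split; lra.
by have [F HF] := choice near_rat; exists F.
Qed.

Lemma ler_term_sum {I : finType} (F : I -> R) i :
  (forall j, 0 <= F j) -> F i <= \sum_j F j.
Proof.
by move=> F0; rewrite (bigD1 i) //= ler_wpDr //; apply: sumr_ge0.
Qed.

Lemma exists_lbound_nonzero_norm {I : finType} (f : I -> R) :
  exists2 D, 0 < D & forall i, f i != 0 -> D <= `|f i|.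
Proof.
(* [`|f i|^-1 = 0] when [f i = 0], so the zero entries do not matter. *)
have S0 : 0 <= \sum_i `|f i|^-1 by apply: sumr_ge0 => i _; rewrite invr_ge0.
exists (1 + \sum_i `|f i|^-1)^-1; first by rewrite invr_gt0; lra.
move=> i fi0; have fi_gt0 : 0 < `|f i| by rewrite normr_gt0.
have le_S : `|f i|^-1 <= \sum_j `|f j|^-1 by apply: ler_term_sum => j; rewrite invr_ge0.
by rewrite -[leRHS]invrK lef_pV2 ?posrE ?invr_gt0 //; lra.
Qed.

Lemma sqr_sub_gap (D a b a' b' : R) : D <= `|a - b| ->
  `|a' - a| < D / 4 -> `|b' - b| < D / 4 ->
  D ^+ 2 / 2 <= (a - b') ^+ 2 - (a - a') ^+ 2.
Proof.
move=> Dab a'a b'b.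
have far : 3 * D / 4 <= `|a - b'|.
  have := ler_distD b' a b; lra.
have near : `|a - a'| <= D / 4 by rewrite distrC ltW.
have D0 : 0 <= D / 4 by apply: le_trans near.
have far2 : (3 * D / 4) ^+ 2 <= `|a - b'| ^+ 2.
  by rewrite ler_pXn2r ?nnegrE //; lra.
have near2 : `|a - a'| ^+ 2 <= (D / 4) ^+ 2 by rewrite ler_pXn2r ?nnegrE.
have -> : D ^+ 2 / 2 = (3 * D / 4) ^+ 2 - (D / 4) ^+ 2 by field.
by rewrite !real_normK ?num_real in far2 near2; lra.
Qed.

Lemma rel_err_expR (a b eps : R) : `|a - b| <= ln (1 + eps) -> 0 < eps ->
  `|(expR a - expR b) / Num.min (expR a) (expR b)| <= eps.
Proof.
wlog ab : a b / a <= b => [hwlog|].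
  case: (leP a b) => [/hwlog//|/ltW ba ab eps0].
  by rewrite minC -normrN -mulNr opprB hwlog // distrC.
rewrite distrC ger0_norm ?subr_ge0 // => ab_eps eps0.
rewrite min_l ?ler_expR // mulrBl divff ?gt_eqF ?expR_gt0 // -expRB.
have : expR (b - a) <= 1 + eps.
  by rewrite -[leRHS]lnK ?posrE ?ler_expR //; lra.
have : 1 <= expR (b - a) by rewrite -expR0 ler_expR subr_ge0.
by rewrite ler_norml; lra.
Qed.

Definition sqdist {n} (u : 'I_n -> R) (q : 'I_n -> rat) : R :=
  \sum_c (u c - ratr (q c)) ^+ 2.

Lemma exists_rat_centers {I : finType} {n} (u : I -> 'I_n -> R) :
  exists2 G, 0 < G & exists q : I -> 'I_n -> rat, forall i k,
    sqdist (u i) (q i) <= sqdist (u i) (q k) /\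
    (u i <> u k -> sqdist (u i) (q i) + G <= sqdist (u i) (q k)).
Proof.
pose du (p : I * I * 'I_n) := u p.1.1 p.2 - u p.1.2 p.2.
have [D D0 HD] := exists_lbound_nonzero_norm du.
have [F HF] := exists_rat_approx (divr_gt0 D0 (ltr0n R 4)).
have G0 : 0 < D ^+ 2 / 2 by rewrite divr_gt0 ?exprn_gt0.
exists (D ^+ 2 / 2) => //; exists (fun i c => F (u i c)) => i k.
pose gain c := (u i c - ratr (F (u k c))) ^+ 2 - (u i c - ratr (F (u i c))) ^+ 2.
have gain_gap c : u i c != u k c -> D ^+ 2 / 2 <= gain c.
  move=> neq; apply: sqr_sub_gap (HF _) (HF _).
  by apply: (HD (i, k, c)); rewrite subr_eq0.
have gain_ge0 c : 0 <= gain c.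
  have [eq_c|neq] := eqVneq (u i c) (u k c); first by rewrite /gain eq_c subrr.
  exact: le_trans (ltW G0) (gain_gap c neq).
have gainE : sqdist (u i) (F \o u k) - sqdist (u i) (F \o u i) = \sum_c gain c.
  by rewrite /sqdist -sumrB.
split; first by rewrite -subr_ge0 gainE sumr_ge0.
move=> neq; have [c /eqP neq_c] : exists c, u i c <> u k c.
  by apply/existsNP => eq_c; apply/neq/funext.
rewrite -lerBrDl gainE (bigD1 c) //= ler_wpDr ?gain_gap //.
exact: sumr_ge0.
Qed.

End Approximation.

Section LogSumExp.
Context {R : realType}.

Lemma sumr_expR_gt0 {K} (X : 'I_K -> R) : (0 < K)%N -> 0 < \sum_k expR (X k).
Proof.
move=> K0; apply: lt_le_trans (expR_gt0 (X (Ordinal K0))) _.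
exact: ler_term_sum (fun k => expR (X k)) _ (fun k => expR_ge0 (X k)).
Qed.

Definition lse {K} (T : R) (X : 'I_K -> R) : R := T * ln (\sum_k expR (X k / T)).

Lemma lse_ge {K} {T : R} (X : 'I_K -> R) k : 0 < T -> X k <= lse T X.
Proof.
move=> T0; have le_sum := ler_term_sum (fun k => expR (X k / T)) k (fun=> expR_ge0 _).
rewrite /lse -ler_pdivrMl // mulrC -[leLHS]expRK ler_ln ?posrE ?expR_gt0 //.
exact: lt_le_trans (expR_gt0 _) le_sum.
Qed.

Lemma lse_le {K} {T : R} (X : 'I_K -> R) M : 0 < T -> (0 < K)%N ->
  (forall k, X k <= M) -> lse T X <= M + T * ln K%:R.
Proof.
move=> T0 K0 XM; have K0R : (0 : R) < K%:R by rewrite ltr0n.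
have S0 := sumr_expR_gt0 (fun k => X k / T) K0.
have le_sum : \sum_k expR (X k / T) <= \sum_(k < K) expR (M / T).
  by apply: ler_sum => k _; rewrite ler_expR ler_pM2r ?invr_gt0.
rewrite sumr_const card_ord -mulr_natl in le_sum.
have : ln (\sum_k expR (X k / T)) <= ln K%:R + M / T.
  by rewrite -[M / T]expRK -lnM ?posrE ?expR_gt0 // ler_ln ?posrE ?mulr_gt0 ?expR_gt0.
rewrite -(ler_pM2l T0) mulrDr [T * (M / T)]mulrC divfK ?gt_eqF // /lse.
by rewrite addrC.
Qed.

Lemma lseDr {K} {T : R} (X : 'I_K -> R) a : 0 < T -> (0 < K)%N ->
  lse T (fun k => X k + a) = lse T X + a.
Proof.
move=> T0 K0; have S0 := sumr_expR_gt0 (fun k => X k / T) K0.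
rewrite /lse; under eq_bigr do rewrite mulrDl expRD.
rewrite -mulr_suml lnM ?posrE ?expR_gt0 // expRK mulrDr.
by rewrite [T * (a / T)]mulrC divfK ?gt_eqF.
Qed.

Lemma lse_sub {K} {T : R} {X Y : 'I_K -> R} {i d} : 0 < T ->
  (forall k, Y k <= Y i) -> (forall k, X k <= X i + d) ->
  `|lse T X - lse T Y - (X i - Y i)| <= d + T * ln K%:R.
Proof.
move=> T0 YY XX; have K0 : (0 < K)%N := leq_ltn_trans (leq0n i) (ltn_ord i).
have := lse_ge X i T0; have := lse_le _ _ T0 K0 XX.
have := lse_ge Y i T0; have := lse_le _ _ T0 K0 YY.
have := XX i; rewrite ler_norml; lra.
Qed.

End LogSumExp.

Section GeneralizedPosynomials.
Context {R : realType}.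

Lemma gposT_lse {n} (T : R) (d : gpos_data n) (x : 'I_n -> R) :
  0 < T -> (0 < gK d)%N -> (forall j, 0 < x j) ->
  gposT T d x = expR (lse T (fun k =>
    ratr (glogc d k) * T + \sum_j ratr (galpha d k j) * ln (x j))).
Proof.
move=> T0 K0 x0; rewrite /gposT /posy /lse.
have powE j a : (x j `^ T^-1) `^ a = expR (a * ln (x j) / T).
  by rewrite -powRrM /powR gt_eqF // [in RHS]mulrC mulrA.
under eq_bigr => k _.
  under eq_bigr do rewrite powE.
  rewrite -expR_sum -expRD -mulr_suml -[X in X + _](mulfK (lt0r_neq0 T0)) -mulrDl.
  over.
rewrite /powR ifF ?gt_eqF //.
exact: sumr_expR_gt0 _ K0.
Qed.

(* Completing the square: 2 C q.u - C |q|^2 = C |u|^2 - C |u - q|^2. *)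
Definition gpos_centers {n K} (T C : rat) (b : 'I_K -> rat)
    (q : 'I_K -> 'I_n -> rat) : gpos_data n :=
  @GposData n K (fun k => (b k - C * \sum_c q k c ^+ 2) / T) (fun k c => 2 * C * q k c).

Definition center_scores {n K} (C : rat) (b : 'I_K -> rat) (q : 'I_K -> 'I_n -> rat)
    (u : 'I_n -> R) (k : 'I_K) : R :=
  ratr (b k) - ratr C * sqdist u (q k).

Lemma gposT_centers {n K} (T C : rat) b (q : 'I_K -> 'I_n -> rat) x :
  0 < T -> (0 < K)%N -> (forall j, 0 < x j) ->
  gposT (ratr T) (gpos_centers T C b q) x =
  expR (lse (ratr T) (center_scores C b q (fun j => ln (x j))) +
        ratr C * \sum_j ln (x j) ^+ 2).
Proof.
move=> T0 K0 x0; have T0R : (0 : R) < ratr T by rewrite ltr0q.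
rewrite gposT_lse // -lseDr //; congr (expR (lse _ _)); apply/funext => k /=.
rewrite /center_scores /sqdist fmorph_div divfK ?lt0r_neq0 // rmorphB rmorphM rmorph_sum.
rewrite !mulr_sumr -!sumrN -!addrA -!big_split /=; congr (_ + _).
by apply: eq_bigr => j _; rewrite rmorphXn !rmorphM /= ratr_nat; ring.
Qed.

Lemma exists_center_interpolant {K n} (u : 'I_K -> 'I_n -> R) (v : 'I_K -> R) {e : R} :
  (forall i k, u i = u k -> v i = v k) -> 0 < e ->
  exists (T C : rat) (b : 'I_K -> rat) (q : 'I_K -> 'I_n -> rat), 0 < T /\
    forall i, `|lse (ratr T) (center_scores C b q (u i)) -
                lse (ratr T) (center_scores C (fun=> 0) q (u i)) - v i| <= e.
Proof.
move=> huv e0.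
have [G G0 [q hq]] := exists_rat_centers u.
pose V := \sum_i `|v i|.
have vV i : `|v i| <= V := ler_term_sum (fun i => `|v i|) i (fun=> normr_ge0 _).
have V0 : 0 <= V by apply: sumr_ge0.
have [C CG C0] : exists2 C : rat, 2 * V <= ratr C * G & 0 <= ratr C :> R.
  have /rat_in_itvoo[C] : 2 * V / G < 2 * V / G + 1 by lra.
  rewrite in_itv /= => /andP[CG _]; exists C; first by rewrite -ler_pdivrMr // ltW.
  by apply: le_trans (ltW CG); apply: divr_ge0; lra.
have [F hF] := exists_rat_approx (divr_gt0 e0 (ltr0n R 4)).
have lnK0 : 0 <= ln K%:R :> R.
  by have [->|K0] := posnP K; [rewrite ln0 | rewrite ln_ge0 // ler1n].
have [T T0 hT] : exists2 T : rat, 0 < ratr T :> R & ratr T * ln K%:R <= e / 4.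
  have /rat_in_itvoo[T] : 0 < e / 4 / (ln K%:R + 1) by rewrite !divr_gt0 //; lra.
  rewrite in_itv /= => /andP[T0]; rewrite ltr_pdivlMr; last by lra.
  by rewrite mulrDr mulr1 => Tlt; exists T => //; lra.
exists T, C, (fun k => F (v k)), q; split; first by rewrite -(ltr0q R).
move=> i; set X := center_scores C _ q (u i); set Y := center_scores C _ q (u i).
have YY k : Y k <= Y i.
  by rewrite /Y /center_scores rmorph0 !sub0r lerN2 ler_wpM2l // (hq i k).1.
have XX k : X k <= X i + e / 2.
  rewrite /X /center_scores; have [eq_ik|neq_ik] := pselect (u i = u k).
    by rewrite -(huv _ _ eq_ik); have := ler_wpM2l C0 (hq i k).1; lra.
  (* A point other than u i loses at least C G >= 2 V in score. *)
  have := ler_wpM2l C0 ((hq i k).2 neq_ik); rewrite mulrDr.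
  have := hF (v i); have := hF (v k); rewrite !ltr_norml.
  have := vV i; have := vV k; rewrite !ler_norml; lra.
have XY : X i - Y i = ratr (F (v i)) by rewrite /X /Y /center_scores rmorph0; ring.
have := lse_sub T0 YY XX; rewrite XY.
have := hF (v i); rewrite ltr_norml !ler_norml; lra.
Qed.

End GeneralizedPosynomials.

Theorem proposition1 (R : realType) (n m : nat)
  (z : 'I_m -> 'I_n -> R) (w : 'I_m -> R)
  (hz : forall i j, 0 < z i j) (hw : forall i, 0 < w i)
  (hl : exists l : ('I_n -> R) -> R,
          (forall x : 'I_n -> R, (forall j, 0 < x j) -> 0 < l x) /\
          (forall i, w i = l (z i))) :
  forall eps : R, 0 < eps ->
  exists (T : rat) (d d' : gpos_data n),
    0 < T /\ (0 < gK d)%N /\ (0 < gK d')%N /\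
    forall i : 'I_m,
      `| (w i - gposT (ratr T) d (z i) / gposT (ratr T) d' (z i))
         / Num.min (w i) (gposT (ratr T) d (z i) / gposT (ratr T) d' (z i)) |
      <= eps.
Proof.
(* Of the function l only [w i = l (z i)] matters: equal points carry equal values. *)
move=> eps eps0; case: hl => l [_ hwl].
case: m z w hz hw hwl => [|m] z w hz hw hwl.
  pose d0 := @GposData n 1 (fun=> 0) (fun _ _ => 0).
  by exists 1%Q, d0, d0; do 3 split => //; case.
pose u i j := ln (z i j).
have huv i k : u i = u k -> ln (w i) = ln (w k).
  move=> uik; suff zik : z i = z k by rewrite !hwl zik.
  apply/funext => j; apply: ln_inj; rewrite ?posrE //.
  by move/(congr1 (fun f => f j)): uik.
have ln_eps : 0 < ln (1 + eps) by apply: ln_gt0; lra.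
have [T [C [b [q [T0 hT]]]]] := exists_center_interpolant u (fun i => ln (w i)) huv ln_eps.
exists T, (gpos_centers T C b q), (gpos_centers T C (fun=> 0) q); do 3 split => //.
move=> i; rewrite !gposT_centers // -expRB -[w i]lnK ?posrE //.
apply: rel_err_expR eps0; rewrite distrC opprD addrACA subrr addr0.
exact: hT.
Qed.
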